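(* Let $V$ be a real vector space, let $F$ be a geometric mean closed vector lattice, let $T\colon V\times V\to F$ be a vector semi-inner product, and let $u\in F^+$. Define $\|x\|^T_u:=T(x,x)\boxtimes u$ for $x\in V$. If $x,y\in V$ satisfy $T(x,y)=0$, then \[ \|x+y\|^T_u=\|x\|^T_u\boxplus\|y\|^T_u. \]
   Context: All vector spaces are over $\mathbb{R}$ and all vector lattices are Archimedean; $F^+=\{x\in F:x\ge0\}$. A vector lattice $F$ is geometric mean closed if $\inf\{\theta u+\theta^{-1}v:\theta\in(0,\infty)\}$ exists in $F$ for all $u,v\in F^+$, and then $u\boxtimes v:=2^{-1}\inf\{\theta u+\theta^{-1}v:\theta\in(0,\infty)\}$. For $u,v\in F$, $u\boxplus v:=\sup\{(\cos\theta)u+(\sin\theta)v:\theta\in[0,2\pi]\}$; this supremum exists in every geometric mean closed vector lattice. A map $T\colon V\times V\to F$ is a vector semi-inner product if it is bilinear, symmetric ($T(x,y)=T(y,x)$), and satisfies $T(x,x)\ge 0$ for all $x\in V$. *)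

From HB Require Import structures.
From mathcomp Require Import all_boot all_order all_algebra.
From mathcomp Require Import all_classical all_reals.
From mathcomp Require Import trigo.
From mathcomp Require Import Rstruct.
From Stdlib Require Import Rdefinitions.

Set Implicit Arguments.
Unset Strict Implicit.
Unset Printing Implicit Defensive.
Import Order.TTheory GRing.Theory Num.Theory.
Local Open Scope classical_set_scope.
Local Open Scope ring_scope.

Notation RR := Rdefinitions.R.

Section Defs.
Variables (F : lmodType RR) (le : F -> F -> Prop).

Definition is_ub (S : set F) (a : F) : Prop := forall s, S s -> le s a.
Definition is_lb (S : set F) (a : F) : Prop := forall s, S s -> le a s.
Definition is_sup (S : set F) (a : F) : Prop :=
  is_ub S a /\ forall b, is_ub S b -> le a b.
Definition is_inf (S : set F) (a : F) : Prop :=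
  is_lb S a /\ forall b, is_lb S b -> le b a.

Record vector_lattice : Prop := {
  vl_refl : forall x, le x x;
  vl_antisym : forall x y, le x y -> le y x -> x = y;
  vl_trans : forall x y z, le x y -> le y z -> le x z;
  vl_add : forall x y z, le x y -> le (x + z) (y + z);
  vl_scale : forall (a : RR) x y, 0 <= a -> le x y -> le (a *: x) (a *: y);
  vl_sup2 : forall x y, exists s, is_sup [set x; y] s;
  vl_inf2 : forall x y, exists s, is_inf [set x; y] s;
  vl_archimedean : forall x y, le 0 x -> le 0 y ->
     (forall n : nat, le (n%:R *: x) y) -> x = 0 }.

Definition gm_set (u v : F) : set F :=
  [set w | exists theta : RR, 0 < theta /\ w = theta *: u + theta^-1 *: v].

Definition geometric_mean_closed : Prop :=
  forall u v, le 0 u -> le 0 v -> exists a, is_inf (gm_set u v) a.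

Definition boxtimes (u v : F) : F :=
  (2 : RR)^-1 *: xget 0 [set a | is_inf (gm_set u v) a].

Definition bp_set (u v : F) : set F :=
  [set w | exists theta : RR, 0 <= theta <= 2 * pi /\
           w = cos theta *: u + sin theta *: v].

Definition boxplus (u v : F) : F :=
  xget 0 [set a | is_sup (bp_set u v) a].

Definition vector_semi_inner_product (V : lmodType RR) (T : V -> V -> F) : Prop :=
  (forall (a : RR) x y z, T (a *: x + y) z = a *: T x z + T y z) /\
  (forall (a : RR) x y z, T x (a *: y + z) = a *: T x y + T x z) /\
  (forall x y, T x y = T y x) /\
  (forall x, le 0 (T x x)).

End Defs.

(* Write a = T(x,x) and b = T(y,y); orthogonality gives T(x+y,x+y) = a + b.  Let P, Q, R be
   the infima of t v + t^-1 u (t > 0) for v = a, b, a + b, so that the claim says that R/2 is the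
   supremum of cos(th) P/2 + sin(th) Q/2.

   Upper bound: c P <= t a + (c^2/t) u for every real c and t > 0; adding this to its analogue
   for (s, b) with c^2 + s^2 = 1 gives c P + s Q <= R.

   Lower bound: R/2 is the supremum over t > 0 of t(a+b) /\ t^-1 u, because
   tX + t^-1 u = 2 (tX /\ t^-1 u) + |tX - t^-1 u| and |tX - t^-1 u| has infimum 0.  Then
   V := t(a+b) /\ t^-1 u splits as A + (V - A) with 0 <= A <= t a and 0 <= V - A <= t b, and for
   s in [0,1], V - |sV - A| = (A /\ sV) + ((V - A) /\ (1-s)V) <= sqrt s P/2 + sqrt (1-s) Q/2;
   again |sV - A| has infimum 0.  Both "infimum 0" statements come from a discrete intermediate
   value argument: along a path g_0, ..., g_M with increments at most k, anything
   below every |g_j| is below g_0^+ + g_M^- + k; the Archimedean property then concludes. *)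

From HB Require Import structures.
From mathcomp Require Import all_boot all_order all_algebra.
From mathcomp Require Import all_classical all_reals.
From mathcomp Require Import trigo Rstruct.
From mathcomp Require Import ring lra.
Import Order.TTheory GRing.Theory Num.Theory.
Local Open Scope ring_scope.

Section Grid.
Local Set Implicit Arguments.
Local Unset Strict Implicit.
Variable n : nat.
Hypothesis n0 : (0 < n)%N.
Local Notation N := (n%:R : RR).

(* The points 1/N + j/N^3, j <= N^4, run from 1/N to N + 1/N with steps of size at most 1/N
   both in t and in 1/t. *)
Definition grid (j : nat) : RR := N^-1 + j%:R / N ^+ 3.

Let N0 : 0 < N. Proof. by rewrite ltr0n. Qed.

Lemma grid_ge j : N^-1 <= grid j.
Proof. by rewrite lerDl divr_ge0 // exprn_ge0 // ltW. Qed.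
Lemma grid_gt0 j : 0 < grid j.
Proof. by apply: lt_le_trans (grid_ge j); rewrite invr_gt0. Qed.
Lemma grid0 : grid 0 = N^-1.
Proof. by rewrite /grid mul0r addr0. Qed.

Lemma grid_step j : grid j.+1 - grid j = (N ^+ 3)^-1.
Proof. by rewrite /grid -natr1; field; rewrite gt_eqF. Qed.
Lemma grid_step_le j : grid j.+1 - grid j <= N^-1.
Proof. by rewrite grid_step lef_pV2 ?posrE ?exprn_gt0 // ler_eXnr // ler1n. Qed.
Lemma grid_inv_step_le j : (grid j)^-1 - (grid j.+1)^-1 <= N^-1.
Proof.
have t0 := grid_gt0 j; have t1 := grid_gt0 j.+1.
have -> : (grid j)^-1 - (grid j.+1)^-1 = (grid j.+1 - grid j) / (grid j * grid j.+1).
  by field; rewrite !gt_eqF.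
rewrite grid_step ler_pdivrMr ?mulr_gt0 // mulrA.
have inv_cube_le : N^-1 * N^-1 * N^-1 <= N^-1 * grid j * grid j.+1.
  by rewrite -mulrA -[X in _ <= X]mulrA ler_pM2l ?invr_gt0 // ler_pM ?grid_ge ?invr_ge0 ?ltW.
by apply: le_trans inv_cube_le; rewrite -exprVn exprS expr2 mulrA.
Qed.
Lemma grid_inv_last : (grid (n ^ 4)%N)^-1 <= N^-1.
Proof.
rewrite lef_pV2 ?posrE ?grid_gt0 ?invr_gt0 // /grid natrX.
have -> : N ^+ 4 / N ^+ 3 = N by field; rewrite gt_eqF.
by rewrite lerDr invr_ge0 ltW.
Qed.
End Grid.

Section VectorLattice.
Local Set Implicit Arguments.
Local Unset Strict Implicit.
Variables (F : lmodType RR) (le : F -> F -> Prop).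
Hypothesis HL : vector_lattice le.
Local Notation "x <=: y" := (le x y) (at level 70, no associativity).

Lemma vle_refl x : x <=: x. Proof. exact: (vl_refl HL). Qed.
Lemma vle_trans x y z : x <=: y -> y <=: z -> x <=: z. Proof. exact: (vl_trans HL). Qed.
Lemma vle_anti x y : x <=: y -> y <=: x -> x = y. Proof. exact: (vl_antisym HL). Qed.

Lemma vleD2r z x y : x <=: y -> x + z <=: y + z. Proof. exact: (vl_add HL). Qed.
Lemma vleD2l z x y : x <=: y -> z + x <=: z + y.
Proof. by rewrite ![z + _]addrC; apply: vleD2r. Qed.
Lemma vleD x y z w : x <=: y -> z <=: w -> x + z <=: y + w.
Proof. by move=> /(vleD2r z) xy /(vleD2l y); apply: vle_trans. Qed.

Lemma vleBlDr x y z : x - z <=: y <-> x <=: y + z.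
Proof. by split=> [/(vleD2r z)|/(vleD2r (- z))]; rewrite ?subrK ?addrK. Qed.
Lemma vleBrDr x y z : x <=: y - z <-> x + z <=: y.
Proof. by split=> [/(vleD2r z)|/(vleD2r (- z))]; rewrite ?subrK ?addrK. Qed.
Lemma vsubr_ge0 x y : 0 <=: y - x <-> x <=: y.
Proof. by rewrite vleBrDr add0r. Qed.
Lemma vsubr_le0 x y : x - y <=: 0 <-> x <=: y.
Proof. by rewrite vleBlDr add0r. Qed.
Lemma vleN2 x y : x <=: y -> - y <=: - x.
Proof. by move/(vleD2r (- x - y)); rewrite addrA subrr add0r [y + _]addrC subrK. Qed.
Lemma voppr_le0 x : 0 <=: x -> - x <=: 0.
Proof. by move/vleN2; rewrite oppr0. Qed.
Lemma vaddr_ge0 x y : 0 <=: x -> 0 <=: y -> 0 <=: x + y.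
Proof. by move=> x0 /(vleD x0); rewrite addr0. Qed.

Lemma vleZ2l (a : RR) x y : 0 <= a -> x <=: y -> a *: x <=: a *: y.
Proof. exact: (vl_scale HL). Qed.
Lemma vscaler_ge0 (a : RR) x : 0 <= a -> 0 <=: x -> 0 <=: a *: x.
Proof. by move=> a0 /(vleZ2l a0); rewrite scaler0. Qed.
Lemma vleZ2r (a b : RR) x : a <= b -> 0 <=: x -> a *: x <=: b *: x.
Proof. by move=> ab x0; apply/vsubr_ge0; rewrite -scalerBl; apply: vscaler_ge0; rewrite ?subr_ge0. Qed.
Lemma vscale_half (x : F) : (2 : RR)^-1 *: (x + x) = x.
Proof. by rewrite -mulr2n -scaler_nat scalerA mulVf ?scale1r ?pnatr_eq0. Qed.

Definition join x y := xget 0 [set s | is_sup le [set x; y] s].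
Definition meet x y := xget 0 [set s | is_inf le [set x; y] s].

Lemma joinP x y : is_sup le [set x; y] (join x y).
Proof. by apply: xgetPex; exact: (vl_sup2 HL). Qed.
Lemma meetP x y : is_inf le [set x; y] (meet x y).
Proof. by apply: xgetPex; exact: (vl_inf2 HL). Qed.

Lemma vleUl x y : x <=: join x y. Proof. by case: (joinP x y) => + _; apply; left. Qed.
Lemma vleUr x y : y <=: join x y. Proof. by case: (joinP x y) => + _; apply; right. Qed.
Lemma vleUx x y z : x <=: z -> y <=: z -> join x y <=: z.
Proof. by move=> xz yz; case: (joinP x y) => _; apply=> s [->|->]. Qed.
Lemma vleIl x y : meet x y <=: x. Proof. by case: (meetP x y) => + _; apply; left. Qed.
Lemma vleIr x y : meet x y <=: y. Proof. by case: (meetP x y) => + _; apply; right. Qed.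
Lemma vlexI x y z : z <=: x -> z <=: y -> z <=: meet x y.
Proof. by move=> zx zy; case: (meetP x y) => _; apply=> s [->|->]. Qed.

Lemma meetC x y : meet x y = meet y x.
Proof. by apply: vle_anti; apply: vlexI; (exact: vleIl || exact: vleIr). Qed.
Lemma vleU2 x y x' y' : x <=: x' -> y <=: y' -> join x y <=: join x' y'.
Proof.
by move=> xx yy; apply: vleUx; [apply: vle_trans xx _ | apply: vle_trans yy _];
  [exact: vleUl | exact: vleUr].
Qed.

Lemma joinDr z x y : join (x + z) (y + z) = join x y + z.
Proof.
apply: vle_anti; first by apply: vleUx; apply: vleD2r; [exact: vleUl | exact: vleUr].
by apply/vleBrDr; apply: vleUx; apply/vleBrDr; [exact: vleUl | exact: vleUr].
Qed.
Lemma meet_oppJ x y : meet x y = - join (- x) (- y).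
Proof.
apply: vle_anti.
  rewrite -[meet x y]opprK; apply: vleN2.
  by apply: vleUx; apply: vleN2; [exact: vleIl | exact: vleIr].
by apply: vlexI; rewrite -[X in _ <=: X]opprK; apply: vleN2; [exact: vleUl | exact: vleUr].
Qed.
Lemma meetDr z x y : meet (x + z) (y + z) = meet x y + z.
Proof. by rewrite !meet_oppJ !opprD joinDr opprD opprK. Qed.
Lemma meetE x y : meet x y = x + y - join x y.
Proof.
have shift : join (- y) (- x) = join x y - (x + y).
  by rewrite -joinDr opprD addrA subrr add0r addrCA subrr addr0.
by rewrite meetC meet_oppJ shift opprB.
Qed.
Lemma joinC x y : join x y = join y x.
Proof. by apply: vle_anti; apply: vleUx; (exact: vleUl || exact: vleUr). Qed.

Lemma meet_join_le x y z : meet x (join y z) <=: join (meet x y) (meet x z).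
Proof.
set d := join (meet x y) (meet x z); set J := join x (join y z).
have bound w : meet x w <=: d -> join x w <=: J -> w <=: d - x + J.
  rewrite meetE => /vleBlDr; rewrite addrC => /vleBrDr wd xwJ.
  by apply: vle_trans wd _; rewrite addrAC; apply: vleD2l.
have yzJ : join y z <=: d - x + J.
  apply: vleUx; apply: bound; try exact: vleUl; try exact: vleUr;
    apply: vleU2 (vle_refl _) _; [exact: vleUl | exact: vleUr].
rewrite meetE; apply/vleBlDr; apply: vle_trans (vleD2l x yzJ) _.
by rewrite addrA [x + _]addrC subrK; exact: vle_refl.
Qed.

Lemma meet_le_half x y : meet x y <=: (2 : RR)^-1 *: (x + y).
Proof.
rewrite -[meet x y]vscale_half; apply: vleZ2l; first by rewrite invr_ge0.
by apply: vleD; [exact: vleIl | exact: vleIr].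
Qed.

Lemma join_le_add x y : 0 <=: x -> 0 <=: y -> join x y <=: x + y.
Proof.
by move=> x0 y0; apply: vleUx; [rewrite -{1}[x]addr0 | rewrite -{1}[y]add0r];
  [apply: vleD2l | apply: vleD2r].
Qed.

Definition pos x := join x 0.
Definition neg x := join (- x) 0.
Definition vabs x := pos x + neg x.

Lemma pos_ge0 x : 0 <=: pos x. Proof. exact: vleUr. Qed.
Lemma neg_ge0 x : 0 <=: neg x. Proof. exact: vleUr. Qed.
Lemma vabs_ge0 x : 0 <=: vabs x.
Proof. exact: vaddr_ge0 (pos_ge0 x) (neg_ge0 x). Qed.
Lemma negN x : neg (- x) = pos x. Proof. by rewrite /neg opprK. Qed.
Lemma posE x : pos x = x + neg x.
Proof. by rewrite addrC /neg -joinDr addNr add0r joinC. Qed.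
Lemma meet_neg x y : meet x y = x - neg (y - x).
Proof.
rewrite /neg opprB -(addNr x) [x - y]addrC joinDr opprD addrCA subrr addr0.
by rewrite meetC meet_oppJ.
Qed.
Lemma meet_pos_neg x : meet (pos x) (neg x) = 0.
Proof.
by rewrite posE -[X in meet _ X]add0r meetDr meet_oppJ oppr0 addNr.
Qed.
Lemma addr_meet_vabs x y : meet x y + meet x y + vabs (x - y) = x + y.
Proof.
rewrite {1}meet_neg meetC meet_neg -[y - x]opprB negN /vabs.
by rewrite addrACA !subrK.
Qed.
Lemma sub_vabs_scaleE (x : RR) V A :
  V - vabs (x *: V - A) = meet A (x *: V) + meet (V - A) ((1 - x) *: V).
Proof.
rewrite !meet_neg (_ : (1 - x) *: V - (V - A) = - (x *: V - A)) ?negN; last first.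
  by rewrite scalerBl scale1r opprB addrC -addrA addKr opprB.
by rewrite addrACA [A + _]addrC subrK /vabs opprD (addrC (- neg _)).
Qed.
Lemma vabsE x : vabs x = join (pos x) (neg x).
Proof. by apply/eqP; rewrite -subr_eq0 -meetE meet_pos_neg. Qed.

Lemma le_join_neg_step e k h0 h1 : 0 <=: k -> h1 <=: h0 + k ->
  e <=: join (neg h0) k -> e <=: vabs h1 -> e <=: join (neg h1) k.
Proof.
move=> k0 h01 e0 e1.
have meet0 a : meet a 0 <=: k by apply: vle_trans (vleIr _ _) k0.
have cross : meet h1 (- h0) <=: k.
  have d : h1 - h0 <=: k by apply/vleBlDr; rewrite addrC.
  apply: vle_trans (meet_le_half _ _) (vle_trans (vleZ2l _ d) _).
    by rewrite invr_ge0.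
  by rewrite -[X in _ <=: X]scale1r; apply: vleZ2r; rewrite // invf_le1 ?ler1n.
have pos_neg : meet (pos h1) (neg h0) <=: k.
  apply: vle_trans (meet_join_le _ _ _) _; apply: vleUx => //.
  rewrite meetC; apply: vle_trans (meet_join_le _ _ _) _; apply: vleUx => //.
  by rewrite meetC.
apply: vle_trans (vlexI e1 e0) _; apply: vle_trans (meet_join_le _ _ _) _.
apply: vleUx; last by apply: vle_trans (vleIr _ _) (vleUr _ _).
rewrite meetC vabsE; apply: vle_trans (meet_join_le _ _ _) _.
apply: vleUx; first by rewrite meetC; apply: vle_trans pos_neg (vleUr _ _).
exact: vle_trans (vleIr _ _) (vleUl _ _).
Qed.

Lemma le_vabs_chain e k (g : nat -> F) M : 0 <=: k ->
  (forall j, (j < M)%N -> g j.+1 <=: g j + k) ->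
  (forall j, (j <= M)%N -> e <=: vabs (g j)) ->
  e <=: pos (g 0%N) + (neg (g M) + k).
Proof.
move=> k0; suff : (forall j, (j < M)%N -> g j.+1 <=: g j + k) ->
    (forall j, (j <= M)%N -> e <=: vabs (g j)) ->
    e - pos (g 0%N) <=: join (neg (g M)) k.
  move=> chain step e_le; have /vleBlDr := chain step e_le.
  rewrite [_ + pos _]addrC => /vle_trans; apply; apply: vleD2l.
  exact: join_le_add (neg_ge0 _) k0.
elim: M => [|M IH] step e_le.
  apply/vleBlDr; rewrite addrC.
  exact: vle_trans (e_le 0%N (leqnn _)) (vleD2l _ (vleUl _ _)).
apply: le_join_neg_step k0 (step M (ltnSn _)) _ _.
  by apply: IH => j jM; [apply: step; exact: ltnW | apply: e_le; exact: leqW].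
apply/vleBlDr; apply: vle_trans (e_le _ (leqnn _)) _.
by rewrite -{1}[vabs _]addr0; apply: vleD2l; exact: pos_ge0.
Qed.

Lemma vle0_of_pos_small x E :
  (forall n : nat, (0 < n)%N -> pos x <=: n%:R^-1 *: E) -> x <=: 0.
Proof.
move=> small.
have nE n : (0 < n)%N -> n%:R *: pos x <=: E.
  move=> n0; have := vleZ2l (ler0n _ n) (small n n0).
  by rewrite scalerA mulfV ?scale1r // pnatr_eq0 -lt0n.
have E0 : 0 <=: E.
  by apply: vle_trans (pos_ge0 x) _; have := nE 1%N isT; rewrite scale1r.
have pos0 : pos x = 0.
  apply: (vl_archimedean HL (pos_ge0 x) E0) => -[|n]; last exact: nE.
  by rewrite scale0r.
by rewrite -pos0; exact: vleUl.
Qed.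

Section GeometricMean.
Variables (a u P : F).
Hypotheses (a0 : 0 <=: a) (u0 : 0 <=: u) (hP : is_inf le (gm_set a u) P).

Lemma gm_inf_le (t : RR) : 0 < t -> P <=: t *: a + t^-1 *: u.
Proof. by case: hP => lb _ t0; apply: lb; exists t. Qed.

Lemma gm_inf_ge v : (forall t : RR, 0 < t -> v <=: t *: a + t^-1 *: u) -> v <=: P.
Proof. by case: hP => _ glb vt; apply: glb => _ [t [t0 ->]]; apply: vt. Qed.

Lemma gm_inf_ge0 : 0 <=: P.
Proof.
apply: gm_inf_ge => t t0; apply: vaddr_ge0; apply: vscaler_ge0 => //.
  exact: ltW. by rewrite invr_ge0 ltW.
Qed.

Lemma scale_gm_inf_le (c t : RR) : 0 < t -> c *: P <=: t *: a + (c ^+ 2 / t) *: u.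
Proof.
move=> t0; have [c0|c_le0] := ltrP 0 c.
  have := vleZ2l (ltW c0) (gm_inf_le (divr_gt0 t0 c0)).
  rewrite scalerDr !scalerA.
  have -> : c * (t / c) = t by field; rewrite gt_eqF.
  by have -> : c * (t / c)^-1 = c ^+ 2 / t by field; rewrite !gt_eqF.
have cP0 : c *: P <=: 0 by rewrite -(scale0r P); apply: vleZ2r c_le0 gm_inf_ge0.
apply: vle_trans cP0 (vaddr_ge0 _ _); apply: vscaler_ge0 => //.
  exact: ltW.
by rewrite divr_ge0 ?sqr_ge0 ?ltW.
Qed.

Lemma le_gm_inf (c k : RR) m : 0 < c -> 0 < k -> 0 <=: m ->
  m <=: (c * k) *: a -> m <=: (c / k) *: u -> m <=: c *: ((2 : RR)^-1 *: P).
Proof.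
move=> c0 k0 m0 ma mu.
suff mP : (2 / c) *: m <=: P.
  have -> : m = (c / 2) *: ((2 / c) *: m).
    by rewrite scalerA -[LHS]scale1r; congr (_ *: _); field; rewrite gt_eqF.
  by rewrite [X in _ <=: X]scalerA; apply: vleZ2l _ mP; rewrite divr_ge0 ?ltW.
apply: gm_inf_ge => t t0.
have ma' : (t / (c * k)) *: m <=: t *: a.
  have := vleZ2l (a := t / (c * k)) _ ma.
  rewrite scalerA mulfVK ?gt_eqF ?mulr_gt0 //; apply.
  by apply: ltW; apply: divr_gt0 => //; exact: mulr_gt0.
have mu' : (k / (c * t)) *: m <=: t^-1 *: u.
  have := vleZ2l (a := k / (c * t)) _ mu; rewrite scalerA.
  have -> : k / (c * t) * (c / k) = t^-1 by field; rewrite !gt_eqF.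
  apply.
  by apply: ltW; apply: divr_gt0 => //; exact: mulr_gt0.
apply: vle_trans (vleD ma' mu'); rewrite -scalerDl; apply: vleZ2r m0.
have -> : t / (c * k) + k / (c * t) = 2 / c + (t - k) ^+ 2 / (c * k * t).
  by field; rewrite !gt_eqF.
by rewrite lerDl divr_ge0 ?sqr_ge0 // ltW // !mulr_gt0.
Qed.
End GeometricMean.

Lemma gm_inf_circle_le a b u P Q R (c s : RR) : 0 <=: a -> 0 <=: b -> 0 <=: u ->
  is_inf le (gm_set a u) P -> is_inf le (gm_set b u) Q ->
  is_inf le (gm_set (a + b) u) R ->
  c ^+ 2 + s ^+ 2 = 1 -> c *: P + s *: Q <=: R.
Proof.
move=> a0 b0 u0 hP hQ hR cs1; apply: (gm_inf_ge hR) => t t0.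
have -> : t *: (a + b) + t^-1 *: u =
    (t *: a + (c ^+ 2 / t) *: u) + (t *: b + (s ^+ 2 / t) *: u).
  by rewrite addrACA -scalerDl -mulrDl cs1 mul1r scalerDr.
by apply: vleD; apply: scale_gm_inf_le.
Qed.

Lemma meet_scale_le_gm_inf a u P A V (t x : RR) : is_inf le (gm_set a u) P ->
  0 <=: A -> A <=: t *: a -> 0 <=: V -> V <=: t^-1 *: u -> 0 < t -> 0 <= x ->
  meet A (x *: V) <=: Num.sqrt x *: ((2 : RR)^-1 *: P).
Proof.
move=> hP A0 Aa V0 Vu t0 x_ge0.
have [->|xn0] := eqVneq x 0; first by rewrite sqrtr0 !scale0r; exact: vleIr.
have x0 : 0 < x by rewrite lt_neqAle eq_sym xn0.
have r0 : 0 < Num.sqrt x by rewrite sqrtr_gt0.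
apply: (le_gm_inf hP r0 (divr_gt0 t0 r0)).
- by apply: vlexI => //; exact: vscaler_ge0.
- have -> : Num.sqrt x * (t / Num.sqrt x) = t by field; rewrite gt_eqF.
  exact: vle_trans (vleIl _ _) Aa.
- have -> : Num.sqrt x / (t / Num.sqrt x) = x * t^-1.
    by rewrite -[in RHS](sqr_sqrtr x_ge0); field; rewrite !gt_eqF.
  by rewrite -scalerA; apply: vle_trans (vleIr _ _) _; exact: vleZ2l.
Qed.

Lemma meet_le_of_circle a b u P Q w (t : RR) : 0 <=: a -> 0 <=: b -> 0 <=: u ->
  is_inf le (gm_set a u) P -> is_inf le (gm_set b u) Q ->
  (forall x : RR, 0 <= x <= 1 ->
     Num.sqrt x *: ((2 : RR)^-1 *: P) + Num.sqrt (1 - x) *: ((2 : RR)^-1 *: Q) <=: w) ->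
  0 < t -> meet (t *: (a + b)) (t^-1 *: u) <=: w.
Proof.
move=> a0 b0 u0 hP hQ circle t0.
set V := meet _ _; set A := meet (t *: a) V.
have V0 : 0 <=: V.
  by apply: vlexI; apply: vscaler_ge0; rewrite ?invr_ge0 ?ltW //; exact: vaddr_ge0.
have A0 : 0 <=: A by apply: vlexI => //; apply: vscaler_ge0 => //; exact: ltW.
have Vu : V <=: t^-1 *: u := vleIr _ _.
have VAb : V - A <=: t *: b.
  apply/vleBlDr; rewrite addrC /A -meetDr; apply: vlexI.
    by rewrite -scalerDr; exact: vleIl.
  by rewrite -{1}[V]addr0; apply: vleD2l; apply: vscaler_ge0 => //; exact: ltW.
have Vw x : 0 <= x <= 1 -> V - vabs (x *: V - A) <=: w.
  move=> /andP[x_ge0 x_le1]; apply: vle_trans (circle x _); last by rewrite x_ge0.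
  rewrite sub_vabs_scaleE.
  have VA0 : 0 <=: V - A by apply/vsubr_ge0; exact: vleIr.
  apply: vleD; first exact: (meet_scale_le_gm_inf hP A0 (vleIl _ _) V0 Vu t0 x_ge0).
  by apply: (meet_scale_le_gm_inf hQ VA0 VAb V0 Vu t0); rewrite subr_ge0.
apply/vsubr_le0; apply: (@vle0_of_pos_small _ V) => n n0.
have N0 : (0 : RR) < n%:R by rewrite ltr0n.
pose g j := (j%:R / n%:R) *: V - A.
have e_le j : (j <= n)%N -> pos (V - w) <=: vabs (g j).
  move=> jn; apply: vleUx (vabs_ge0 _); apply/vleBlDr; rewrite addrC; apply/vleBlDr.
  by apply: Vw; rewrite divr_ge0 ?ler0n //= ler_pdivrMr // mul1r ler_nat.
have step j : (j < n)%N -> g j.+1 <=: g j + n%:R^-1 *: V.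
  by move=> _; rewrite /g -natr1 mulrDl scalerDl mul1r addrAC; exact: vle_refl.
have g0 : pos (g 0%N) <=: 0.
  by apply: vleUx (vle_refl _); rewrite /g mul0r scale0r add0r; exact: voppr_le0.
have gn : neg (g n) <=: 0.
  apply: vleUx (vle_refl _); rewrite /g divff ?gt_eqF // scale1r.
  by apply: voppr_le0; apply/vsubr_ge0; exact: vleIr.
have k0 : 0 <=: n%:R^-1 *: V by apply: vscaler_ge0; rewrite ?invr_ge0 ?ler0n.
apply: vle_trans (le_vabs_chain k0 step e_le) _.
by have := vleD g0 (vleD gn (vle_refl (n%:R^-1 *: V))); rewrite !add0r.
Qed.

Lemma half_gm_inf_le_of_meet X u R w : 0 <=: X -> 0 <=: u -> is_inf le (gm_set X u) R ->
  (forall t : RR, 0 < t -> meet (t *: X) (t^-1 *: u) <=: w) ->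
  (2 : RR)^-1 *: R <=: w.
Proof.
move=> X0 u0 hR meet_w.
suff Rw : R <=: w + w.
  by rewrite -(vscale_half w); apply: vleZ2l Rw; rewrite invr_ge0.
apply/vsubr_le0; apply: (@vle0_of_pos_small _ ((X + u) + (X + u))) => n n0.
have Ni0 : (0 : RR) <= n%:R^-1 by rewrite invr_ge0.
pose g j := grid n j *: X - (grid n j)^-1 *: u.
have e_le j : (j <= n ^ 4)%N -> pos (R - (w + w)) <=: vabs (g j).
  move=> _; apply: vleUx (vabs_ge0 _); apply/vleBlDr.
  apply: vle_trans (gm_inf_le hR (grid_gt0 n0 j)) _.
  rewrite -(addr_meet_vabs (grid n j *: X)) [vabs _ + _]addrC.
  by apply: vleD2r; apply: vleD; apply: meet_w (grid_gt0 n0 j).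
have step j : (j < n ^ 4)%N -> g j.+1 <=: g j + n%:R^-1 *: (X + u).
  move=> _; rewrite (addrC (g j)); apply/(vleBlDr _ _ (g j)).
  have -> : g j.+1 - g j = (grid n j.+1 - grid n j) *: X +
      ((grid n j)^-1 - (grid n j.+1)^-1) *: u.
    rewrite /g !scalerBl opprB [LHS]addrACA [RHS]addrACA; congr (_ + _); exact: addrC.
  rewrite scalerDr; apply: vleD; apply: vleZ2r => //.
    exact: grid_step_le. exact: grid_inv_step_le.
have g0 : pos (g 0%N) <=: n%:R^-1 *: X.
  apply: vleUx; last exact: vscaler_ge0.
  rewrite /g grid0 //; apply/vleBlDr; rewrite -{1}[_ *: X]addr0; apply: vleD2l.
  by apply: vscaler_ge0; rewrite ?invr_ge0.
have gM : neg (g (n ^ 4)%N) <=: n%:R^-1 *: u.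
  apply: vleUx; last exact: vscaler_ge0.
  rewrite /g opprB; apply/vleBlDr; apply: vle_trans (vleZ2r (grid_inv_last n0) u0) _.
  rewrite -{1}[_ *: u]addr0; apply: vleD2l.
  by apply: vscaler_ge0 X0; exact: ltW (grid_gt0 n0 _).
have k0 : 0 <=: n%:R^-1 *: (X + u) by apply: vscaler_ge0 => //; exact: vaddr_ge0.
apply: vle_trans (le_vabs_chain k0 step e_le) _.
by have := vleD g0 (vleD gM (vle_refl (n%:R^-1 *: (X + u)))); rewrite !scalerDr !addrA.
Qed.

Lemma gm_inf_circle_sup a b u P Q R : 0 <=: a -> 0 <=: b -> 0 <=: u ->
  is_inf le (gm_set a u) P -> is_inf le (gm_set b u) Q ->
  is_inf le (gm_set (a + b) u) R ->
  is_sup le (bp_set ((2 : RR)^-1 *: P) ((2 : RR)^-1 *: Q)) ((2 : RR)^-1 *: R).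
Proof.
move=> a0 b0 u0 hP hQ hR; split.
  move=> _ [th [_ ->]]; rewrite !scalerA ![_ * 2^-1]mulrC -!scalerA -scalerDr.
  apply: vleZ2l; first by rewrite invr_ge0.
  exact: gm_inf_circle_le a0 b0 u0 hP hQ hR (cos2Dsin2 th).
move=> w w_ub; apply: (half_gm_inf_le_of_meet (vaddr_ge0 a0 b0) u0 hR) => t t0.
apply: (meet_le_of_circle a0 b0 u0 hP hQ _ t0) => x /andP[x0 x1].
have sx1 : -1 <= Num.sqrt x <= 1.
  by rewrite (le_trans _ (sqrtr_ge0 x)) ?lerN10 //= -sqrtr1 ler_sqrt.
have [/andP[th0 thpi] cos_th] := acos_def sx1.
apply: w_ub; exists (acos (Num.sqrt x)); split.
  by rewrite th0 (le_trans thpi) // ler_peMl ?pi_ge0 ?ler1n.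
by rewrite cos_th sin_acos // sqr_sqrtr.
Qed.

Lemma boxtimesE a u P : is_inf le (gm_set a u) P -> boxtimes le a u = (2 : RR)^-1 *: P.
Proof.
move=> [Plb Pglb]; rewrite /boxtimes (@xget_unique _ _ _ P) // => Q [Qlb Qglb].
by apply: vle_anti; [apply: Pglb | apply: Qglb].
Qed.

Lemma boxplusE v w s : is_sup le (bp_set v w) s -> boxplus le v w = s.
Proof.
move=> [sub sglb]; rewrite /boxplus (@xget_unique _ _ _ s) // => r [rub rlub].
by apply: vle_anti; [apply: rlub | apply: sglb].
Qed.

Lemma vsip_pythagoras (V : lmodType RR) (T : V -> V -> F) x y :
  vector_semi_inner_product le T -> T x y = 0 -> T (x + y) (x + y) = T x x + T y y.
Proof.
move=> [Tl [Tr [Tsym _]]] Txy.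
have addl z : T (x + y) z = T x z + T y z by rewrite -{1}[x]scale1r Tl scale1r.
have addr z w : T z (w + y) = T z w + T z y by rewrite -{1}[w]scale1r Tr scale1r.
by rewrite addl !addr Txy Tsym Txy addr0 add0r.
Qed.

End VectorLattice.

Theorem theorem3p7 (V F : lmodType RR) (le : F -> F -> Prop)
  (T : V -> V -> F) (u : F) (x y : V) :
  vector_lattice le ->
  geometric_mean_closed le ->
  vector_semi_inner_product le T ->
  le 0 u ->
  T x y = 0 ->
  boxtimes le (T (x + y) (x + y)) u =
  boxplus le (boxtimes le (T x x) u) (boxtimes le (T y y) u).
Proof.
move=> HL gm_closed Tsip u0 Txy; have [_ [_ [_ T_ge0]]] := Tsip.
have [P hP] := gm_closed _ _ (T_ge0 x) u0.
have [Q hQ] := gm_closed _ _ (T_ge0 y) u0.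
have [R hR] := gm_closed _ _ (vaddr_ge0 HL (T_ge0 x) (T_ge0 y)) u0.
rewrite (vsip_pythagoras Tsip Txy) (boxtimesE HL hP) (boxtimesE HL hQ) (boxtimesE HL hR).
by rewrite (boxplusE HL (gm_inf_circle_sup HL (T_ge0 x) (T_ge0 y) u0 hP hQ hR)).
Qed.
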